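(* For every $N\ge 3$, $\mathbb{E}[\mathcal{N}_1(N)^3]=\frac{N^2(N+1)}{8}$ and the third cumulant vanishes: $\mathbb{E}\big[(\mathcal{N}_1(N)-N/2)^3\big]=0$. For every $N\ge 5$, $$\mathbb{E}[\mathcal{N}_1(N)^4]=\frac{N(15N^3+30N^2+5N-2)}{240},$$ and the fourth cumulant of $\mathcal{N}_1(N)$ equals $-N/120$.
   Context: A random recursive hypergraph (RRH) is the random hypergraph process defined as follows. At size $N=1$ it has vertex set $\{v_1\}$ and edge set $\{\{v_1\}\}$. Given the hypergraph of size $N$ (vertices $v_1,\dots,v_N$, exactly $N$ edges), one chooses an existing edge $e$ uniformly at random, independently of the past, and adds a new vertex $v_{N+1}$ together with the new edge $e\cup\{v_{N+1}\}$. The degree of a vertex is the number of edges containing it. $\mathcal{N}_k(N)$ denotes the number of vertices of degree $k$ in the RRH of size $N$. The fourth cumulant of a random variable $X$ with mean $\mu$ is $\mathbb{E}[(X-\mu)^4]-3\operatorname{Var}[X]^2$. *)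

From mathcomp Require Import all_boot all_order all_algebra.
Set Implicit Arguments. Unset Strict Implicit. Unset Printing Implicit Defensive.
Import Order.TTheory GRing.Theory Num.Theory.
Local Open Scope ring_scope.

(* A history of the RRH up to size N is a choice sequence s of length N-1:
   s`_j (0-based j) is the (0-based) index of the edge chosen when the
   hypergraph has size j+1, so s`_j < j+1.  Vertices are 0..N-1 (v_{i+1} is i),
   edges are indexed 0..N-1 (edge i is the one created together with vertex i). *)

Definition rrh_edges (s : seq nat) : seq (seq nat) :=
  foldl (fun es c => rcons es (size es :: nth [::] es c)) [:: [:: 0%N]] s.

Definition rrh_deg (s : seq nat) (v : nat) : nat :=
  count (fun e => v \in e) (rrh_edges s).

Definition rrh_Nk (k N : nat) (s : seq nat) : nat :=
  count (fun v => rrh_deg s v == k) (iota 0 N).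

Fixpoint rrh_choices (k : nat) : seq (seq nat) :=
  match k with
  | 0 => [:: [::]]
  | k'.+1 => [seq rcons s c | s <- rrh_choices k', c <- iota 0 k'.+1]
  end.

Definition rrh_prob (s : seq nat) : rat :=
  \prod_(j < size s) (j.+1%:R)^-1.

Definition rrh_E (N : nat) (f : seq nat -> rat) : rat :=
  \sum_(s <- rrh_choices N.-1) rrh_prob s * f s.

Definition rrh_cumulant4 (N : nat) (f : seq nat -> rat) : rat :=
  let mu := rrh_E N f in
  let var := rrh_E N (fun s => (f s - mu) ^+ 2) in
  rrh_E N (fun s => (f s - mu) ^+ 4) - 3 * var ^+ 2.

Definition N1 (N : nat) (s : seq nat) : rat := (rrh_Nk 1 N s)%:R.

From mathcomp Require Import all_boot all_order all_algebra.
From mathcomp Require Import zify ring lra.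
Import Order.TTheory GRing.Theory Num.Theory.
Local Open Scope ring_scope.

(* The number L_N = N_1(N) of leaves (degree-one vertices)
   evolves as a Markov chain: when the edge e_c created with vertex c is
   chosen, the new vertex is a leaf, and the only old leaf that can be
   absorbed is c itself (every other vertex of e_c is older than c and
   already lies in two edges).  Since vertex c is chosen with probability
   1/N, L_{N+1} = L_N with probability L_N/N and L_N + 1 otherwise, i.e.
     E[g(L_{N+1})] = E[(L_N g(L_N) + (N - L_N) g(L_N + 1)) / N].
   Taking g(x) = x^j gives linear recursions for the raw moments
   m_j(N) = E[L_N^j], j <= 4, which are solved by induction on N.  The
   central moments in the theorem are expanded binomially into raw moments. *)

Lemma rrh_edges_rcons s c : rrh_edges (rcons s c) =
  rcons (rrh_edges s) (size (rrh_edges s) :: nth [::] (rrh_edges s) c).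
Proof. by rewrite /rrh_edges foldl_rcons. Qed.

Lemma size_rrh_edges s : size (rrh_edges s) = (size s).+1.
Proof.
by elim/last_ind: s => [//|s c IH]; rewrite rrh_edges_rcons !size_rcons IH.
Qed.

Lemma rrh_edge_le s i : all (fun v => v <= i)%N (nth [::] (rrh_edges s) i).
Proof.
elim/last_ind: s i => [|s c IH] i; first by case: i => [|[|i]].
rewrite rrh_edges_rcons nth_rcons; case: ifP => _; first exact: IH.
case: eqP => [->|_] //=; rewrite leqnn /=.
have [Hc|Hc] := ltnP c (size (rrh_edges s)); last by rewrite nth_default.
by apply: sub_all (IH c) => v /= Hv; lia.
Qed.

Lemma rrh_edge_self s i : (i < size (rrh_edges s))%N ->
  i \in nth [::] (rrh_edges s) i.
Proof.
elim/last_ind: s i => [|s c IH] i; first by case: i => [|[|i]].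
rewrite rrh_edges_rcons size_rcons nth_rcons => Hi.
case: ifP => Hi'; first exact: IH.
have -> : i = size (rrh_edges s) by lia.
by rewrite eqxx mem_head.
Qed.

Lemma rrh_deg_rcons s c v : rrh_deg (rcons s c) v =
  (rrh_deg s v + (v \in size (rrh_edges s) :: nth [::] (rrh_edges s) c))%N.
Proof. by rewrite /rrh_deg rrh_edges_rcons -cats1 count_cat /= addn0. Qed.

Lemma rrh_deg_new s : rrh_deg s (size (rrh_edges s)) = 0%N.
Proof.
apply/eqP; rewrite /rrh_deg eqn0Ngt -has_count.
apply/negP => /(has_nthP [::]) [i Hi Hin].
by have := allP (rrh_edge_le s i) _ Hin; rewrite leqNgt Hi.
Qed.

Lemma rrh_deg_gt0 s v : (v < size (rrh_edges s))%N -> (0 < rrh_deg s v)%N.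
Proof.
move=> Hv; rewrite /rrh_deg -has_count; apply/(has_nthP [::]).
by exists v => //; apply: rrh_edge_self.
Qed.

(* A vertex v of a later edge e_c (v < c) lies in e_v and e_c: degree >= 2. *)
Lemma rrh_deg_gt1 s v c : (v < c)%N -> (c < size (rrh_edges s))%N ->
  v \in nth [::] (rrh_edges s) c -> (1 < rrh_deg s v)%N.
Proof.
move=> Hvc Hc Hin; rewrite /rrh_deg -(cat_take_drop c (rrh_edges s)) count_cat.
have Htake : (0 < count (fun e => v \in e) (take c (rrh_edges s)))%N.
  rewrite -has_count; apply/(has_nthP [::]); exists v; first by rewrite size_take Hc.
  by rewrite (nth_take _ Hvc); apply: rrh_edge_self; lia.
have Hdrop : (0 < count (fun e => v \in e) (drop c (rrh_edges s)))%N.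
  rewrite -has_count; apply/(has_nthP [::]); exists 0%N.
    by rewrite size_drop subn_gt0.
  by rewrite nth_drop addn0.
lia.
Qed.

Lemma rrh_leaf_in_edge s v c : (c < size (rrh_edges s))%N ->
  v \in nth [::] (rrh_edges s) c -> rrh_deg s v = 1%N -> v = c.
Proof.
move=> Hc Hin Hleaf; have Hvc := allP (rrh_edge_le s c) _ Hin.
case: (ltngtP v c) Hvc => // Hlt _.
by have := @rrh_deg_gt1 s v c Hlt Hc Hin; rewrite Hleaf.
Qed.

Lemma count_andC (T : Type) (a b : pred T) (r : seq T) :
  count a r = (count (fun x => a x && b x) r + count (fun x => a x && ~~ b x) r)%N.
Proof. by elim: r => [//|x r IH] /=; rewrite IH; case: (a x); case: (b x) => /=; lia. Qed.

Lemma rrh_old_leaves s c : (c < size (rrh_edges s))%N ->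
  let n := size (rrh_edges s) in
  (count (fun v => rrh_deg (rcons s c) v == 1%N) (iota 0 n) + (rrh_deg s c == 1%N)
   = count (fun v => rrh_deg s v == 1%N) (iota 0 n))%N.
Proof.
move=> Hc n; set inc := fun v => v \in nth [::] (rrh_edges s) c.
rewrite [RHS](count_andC _ _ inc) addnC; congr (_ + _)%N.
  rewrite (@eq_in_count _ _ (fun v => (v == c) && (rrh_deg s c == 1%N))); last first.
    move=> v; rewrite mem_iota add0n => /andP[_ Hv].
    have [->|Hne] := eqVneq v c; first by rewrite /inc rrh_edge_self // andbT.
    rewrite andFb; apply/negbTE/andP => -[/eqP Hleaf Hin].
    by rewrite (@rrh_leaf_in_edge s v c) ?eqxx in Hne.
  case: (rrh_deg s c == 1%N); last first.
    by rewrite (eq_count (a2 := pred0)) ?count_pred0 // => v; rewrite andbF.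
  rewrite (eq_count (a2 := pred1 c)); last by move=> v; rewrite andbT.
  by rewrite count_uniq_mem ?iota_uniq // mem_iota add0n Hc.
apply: eq_in_count => v; rewrite mem_iota add0n => /andP[_ Hv].
rewrite rrh_deg_rcons in_cons (ltn_eqF Hv) /=.
by have := @rrh_deg_gt0 s v Hv; rewrite /inc; case: (v \in _) => /=; lia.
Qed.

Lemma rrh_leaves_rcons s c : (c < (size s).+1)%N ->
  (rrh_Nk 1 (size s).+2 (rcons s c) + (rrh_deg s c == 1%N)
   = rrh_Nk 1 (size s).+1 s + 1)%N.
Proof.
move=> Hc; have Hn := size_rrh_edges s.
rewrite /rrh_Nk -(addn1 (size s).+1) iotaD count_cat add0n -Hn /=.
rewrite rrh_deg_rcons rrh_deg_new mem_head addn0 -addnA [(1 + _)%N]addnC addnA.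
by rewrite rrh_old_leaves // Hn.
Qed.

Lemma size_rrh_choices k s : s \in rrh_choices k -> size s = k.
Proof.
elim: k s => [|k IH] s; first by rewrite /= inE => /eqP ->.
by case/allpairsPdep => t [c [Ht _ ->]]; rewrite size_rcons (IH t Ht).
Qed.

Lemma rrh_prob_rcons s c : rrh_prob (rcons s c) = rrh_prob s / (size s).+1%:R.
Proof. by rewrite /rrh_prob size_rcons big_ord_recr. Qed.

Lemma sum_if (r : seq nat) (P : pred nat) (a b : rat) :
  \sum_(c <- r) (if P c then a else b) =
  (count P r)%:R * a + (count (predC P) r)%:R * b.
Proof.
elim: r => [|x r IH]; first by rewrite big_nil !mul0r addr0.
by rewrite big_cons IH /=; case: (P x) => /=; rewrite !natrD; ring.
Qed.

Lemma rrh_E_leaf_step k (g : nat -> rat) :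
  rrh_E k.+2 (fun s => g (rrh_Nk 1 k.+2 s)) =
  rrh_E k.+1 (fun s => let L := rrh_Nk 1 k.+1 s in
     (L%:R * g L + (k.+1%:R - L%:R) * g L.+1) / k.+1%:R).
Proof.
rewrite /rrh_E big_allpairs_dep big_seq [RHS]big_seq.
apply: eq_bigr => s /size_rrh_choices Hsz; rewrite [in RHS]/=.
set L := rrh_Nk 1 k.+1 s.
under eq_bigr => c _ do rewrite rrh_prob_rcons Hsz -mulrA.
rewrite -big_distrr; congr (_ * _).
rewrite -big_distrr mulrC; congr (_ * _).
rewrite big_seq (eq_bigr (fun c => if rrh_deg s c == 1%N then g L else g L.+1)); last first.
  move=> c; rewrite mem_iota add0n => /andP[_ Hc].
  have := @rrh_leaves_rcons s c; rewrite Hsz => /(_ Hc).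
  case: (rrh_deg s c == 1%N) => Hstep; first by rewrite (addIn Hstep).
  by rewrite addn0 in Hstep; rewrite Hstep addn1.
have HL : (L + count (predC (fun v => rrh_deg s v == 1%N)) (iota 0 k.+1))%N = k.+1.
  by rewrite count_predC size_iota.
rewrite -big_seq sum_if -/L; congr (_ + _ * _).
by rewrite -[in RHS]HL natrD addrC addKr.
Qed.

Lemma rrh_E_ext N (f g : seq nat -> rat) :
  (forall s, f s = g s) -> rrh_E N f = rrh_E N g.
Proof. by move=> Hfg; apply: eq_bigr => s _; rewrite Hfg. Qed.

Lemma rrh_E_add N (f g : seq nat -> rat) :
  rrh_E N (fun s => f s + g s) = rrh_E N f + rrh_E N g.
Proof. by rewrite /rrh_E -big_split; apply: eq_bigr => s _; rewrite mulrDr. Qed.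

Lemma rrh_E_scale N a (f : seq nat -> rat) :
  rrh_E N (fun s => a * f s) = a * rrh_E N f.
Proof. by rewrite /rrh_E big_distrr; apply: eq_bigr => s _; rewrite mulrCA. Qed.

Lemma rrh_E_one k : rrh_E k.+1 (fun _ => 1) = 1.
Proof.
elim: k => [|k IH].
  by rewrite /rrh_E big_seq1 /rrh_prob big_ord0 mulr1.
rewrite (rrh_E_leaf_step k (fun _ => 1)) -[RHS]IH; apply: rrh_E_ext => s /=.
by have := ler0n rat k => Hk; field; lra.
Qed.

Lemma rrh_E_const k a : rrh_E k.+1 (fun _ => a) = a.
Proof. by rewrite -[X in rrh_E _ (fun _ => X)]mulr1 rrh_E_scale rrh_E_one mulr1. Qed.

Definition mom (j N : nat) : rat := rrh_E N (fun s => N1 N s ^+ j).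

Lemma rrh_E_poly4 k (a0 a1 a2 a3 a4 : rat) :
  rrh_E k.+1 (fun s => a0 + a1 * N1 k.+1 s + a2 * N1 k.+1 s ^+ 2
     + a3 * N1 k.+1 s ^+ 3 + a4 * N1 k.+1 s ^+ 4) =
  a0 + a1 * mom 1 k.+1 + a2 * mom 2 k.+1 + a3 * mom 3 k.+1 + a4 * mom 4 k.+1.
Proof. by rewrite !rrh_E_add !rrh_E_scale rrh_E_const. Qed.

Lemma mom_step k j (a0 a1 a2 a3 a4 : rat) :
  (forall x : rat, (x * x ^+ j + (k.+1%:R - x) * (x + 1) ^+ j) / k.+1%:R
      = a0 + a1 * x + a2 * x ^+ 2 + a3 * x ^+ 3 + a4 * x ^+ 4) ->
  mom j k.+2 =
  a0 + a1 * mom 1 k.+1 + a2 * mom 2 k.+1 + a3 * mom 3 k.+1 + a4 * mom 4 k.+1.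
Proof.
move=> Hpoly; rewrite [LHS]/mom /N1.
have := rrh_E_leaf_step k (fun l => l%:R ^+ j); rewrite /= => ->.
rewrite -rrh_E_poly4; apply: rrh_E_ext => s.
by rewrite /N1 -Hpoly -[(rrh_Nk 1 k.+1 s).+1]addn1 natrD.
Qed.

Lemma mom_size1 j : mom j 1 = 1.
Proof. by rewrite /mom /rrh_E big_seq1 /rrh_prob big_ord0 mul1r expr1n. Qed.

Section MomentRecursions.
Variable k : nat.
Let n : rat := k.+1%:R.

Lemma mom1_step : mom 1 k.+2 =
  1 + (1 - n^-1) * mom 1 k.+1 + 0 * mom 2 k.+1 + 0 * mom 3 k.+1 + 0 * mom 4 k.+1.
Proof. by apply: mom_step => x; rewrite -/n; field; have := ler0n rat k; lra. Qed.

Lemma mom2_step : mom 2 k.+2 =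
  1 + (2 - n^-1) * mom 1 k.+1 + (1 - 2 / n) * mom 2 k.+1
    + 0 * mom 3 k.+1 + 0 * mom 4 k.+1.
Proof. by apply: mom_step => x; rewrite -/n; field; have := ler0n rat k; lra. Qed.

Lemma mom3_step : mom 3 k.+2 =
  1 + (3 - n^-1) * mom 1 k.+1 + (3 - 3 / n) * mom 2 k.+1
    + (1 - 3 / n) * mom 3 k.+1 + 0 * mom 4 k.+1.
Proof. by apply: mom_step => x; rewrite -/n; field; have := ler0n rat k; lra. Qed.

Lemma mom4_step : mom 4 k.+2 =
  1 + (4 - n^-1) * mom 1 k.+1 + (6 - 4 / n) * mom 2 k.+1
    + (4 - 6 / n) * mom 3 k.+1 + (1 - 4 / n) * mom 4 k.+1.
Proof. by apply: mom_step => x; rewrite -/n; field; have := ler0n rat k; lra. Qed.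
End MomentRecursions.

Lemma mom1_closed k : mom 1 k.+2 = k.+2%:R / 2.
Proof.
elim: k => [|k IH]; first by rewrite mom1_step mom_size1; field.
rewrite mom1_step IH !mulrSr; have := ler0n rat k => Hk; field; lra.
Qed.

Lemma mom2_closed k : mom 2 k.+3 = k.+3%:R * (3 * k.+3%:R + 1) / 12.
Proof.
elim: k => [|k IH].
  by rewrite mom2_step mom1_step mom2_step !mom_size1; field.
rewrite mom2_step IH mom1_closed !mulrSr; have := ler0n rat k => Hk; field; lra.
Qed.

Lemma mom3_closed k : mom 3 k.+3 = k.+3%:R ^+ 2 * (k.+3%:R + 1) / 8.
Proof.
elim: k => [|k IH].
  by rewrite mom3_step mom1_step mom2_step mom3_step !mom_size1; field.
rewrite mom3_step IH mom2_closed mom1_closed !mulrSr.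
have := ler0n rat k => Hk; field; lra.
Qed.

Lemma mom4_closed k : mom 4 k.+4.+1 =
  k.+4.+1%:R * (15 * k.+4.+1%:R ^+ 3 + 30 * k.+4.+1%:R ^+ 2 + 5 * k.+4.+1%:R - 2) / 240.
Proof.
elim: k => [|k IH].
  by rewrite !(mom1_step, mom2_step, mom3_step, mom4_step) !mom_size1; field.
rewrite mom4_step IH mom3_closed mom2_closed mom1_closed !mulrSr.
have := ler0n rat k => Hk; field; lra.
Qed.

Lemma rrh_E_centered2 k a : rrh_E k.+1 (fun s => (N1 k.+1 s - a) ^+ 2) =
  a ^+ 2 - 2 * a * mom 1 k.+1 + mom 2 k.+1.
Proof.
transitivity (rrh_E k.+1 (fun s => a ^+ 2 + (- 2 * a) * N1 k.+1 s
   + 1 * N1 k.+1 s ^+ 2 + 0 * N1 k.+1 s ^+ 3 + 0 * N1 k.+1 s ^+ 4)).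
  by apply: rrh_E_ext => s; ring.
by rewrite rrh_E_poly4; ring.
Qed.

Lemma rrh_E_centered3 k a : rrh_E k.+1 (fun s => (N1 k.+1 s - a) ^+ 3) =
  - a ^+ 3 + 3 * a ^+ 2 * mom 1 k.+1 - 3 * a * mom 2 k.+1 + mom 3 k.+1.
Proof.
transitivity (rrh_E k.+1 (fun s => - a ^+ 3 + (3 * a ^+ 2) * N1 k.+1 s
   + (- 3 * a) * N1 k.+1 s ^+ 2 + 1 * N1 k.+1 s ^+ 3 + 0 * N1 k.+1 s ^+ 4)).
  by apply: rrh_E_ext => s; ring.
by rewrite rrh_E_poly4; ring.
Qed.

Lemma rrh_E_centered4 k a : rrh_E k.+1 (fun s => (N1 k.+1 s - a) ^+ 4) =
  a ^+ 4 - 4 * a ^+ 3 * mom 1 k.+1 + 6 * a ^+ 2 * mom 2 k.+1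
    - 4 * a * mom 3 k.+1 + mom 4 k.+1.
Proof.
transitivity (rrh_E k.+1 (fun s => a ^+ 4 + (- 4 * a ^+ 3) * N1 k.+1 s
   + (6 * a ^+ 2) * N1 k.+1 s ^+ 2 + (- 4 * a) * N1 k.+1 s ^+ 3
   + 1 * N1 k.+1 s ^+ 4)).
  by apply: rrh_E_ext => s; ring.
by rewrite rrh_E_poly4; ring.
Qed.

Theorem mainTheorem3 :
  (forall N : nat, (3 <= N)%N ->
     rrh_E N (fun s => N1 N s ^+ 3) = (N%:R ^+ 2 * (N%:R + 1)) / 8 /\
     rrh_E N (fun s => (N1 N s - N%:R / 2) ^+ 3) = 0) /\
  (forall N : nat, (5 <= N)%N ->
     rrh_E N (fun s => N1 N s ^+ 4) =
       N%:R * (15 * N%:R ^+ 3 + 30 * N%:R ^+ 2 + 5 * N%:R - 2) / 240 /\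
     rrh_cumulant4 N (N1 N) = - (N%:R / 120)).
Proof.
split=> N HN.
  have [k ->] : exists k, N = k.+3 by exists (N - 3)%N; lia.
  split; first exact: mom3_closed.
  rewrite (rrh_E_centered3 k.+2) (mom1_closed k.+1) mom2_closed mom3_closed.
  by field.
have [k ->] : exists k, N = k.+4.+1 by exists (N - 5)%N; lia.
split; first exact: mom4_closed.
rewrite /rrh_cumulant4 -[rrh_E _ (N1 _)]/(mom 1 k.+4.+1).
rewrite (rrh_E_centered2 k.+4) (rrh_E_centered4 k.+4).
rewrite (mom1_closed k.+3) (mom2_closed k.+2) (mom3_closed k.+2) mom4_closed.
by field.
Qed.
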